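(* Let $\Psi$ be a marked $A_3$ simplicial complex satisfying CCCC. (iii.a) If $v,u_1,w,u_2$ is an embedded closed edge path in $\Psi$ with $v$ of type $\hat b$, $u_1,u_2$ of type $\hat c$ and $w$ of type $\hat a$, then $v$ and $w$ are joined by an edge and $\{v,u_1,w\}$ and $\{v,w,u_2\}$ are $2$-simplices of $\Psi$. (iii.b) The same holds with the types $\hat a$ and $\hat c$ interchanged.
   Context: Let $\Delta$ be the spherical triangle with vertices labelled $\hat a,\hat b,\hat c$, with angle $\pi/3$ at $\hat a$ and $\hat c$ and angle $\pi/2$ at $\hat b$. A marked $A_3$ simplicial complex is a homogeneous $2$-dimensional simplicial complex $\Psi$ in which each $2$-simplex $\sigma$ has an isomorphism $m_\sigma:\sigma\to\Delta$ such that $m_\sigma(x)=m_{\sigma'}(x)$ for all $x\in\sigma\cap\sigma'$; a vertex has type $\hat a,\hat b,\hat c$ according to the label of its image under any marking. $\Psi$ satisfies CCCC if: (1) the link of every vertex of type $\hat a$ or $\hat c$ has girth at least $6$; (2) the link of every vertex of type $\hat b$ is a complete bipartite graph containing an embedded $4$-cycle; (3) (i) every embedded closed edge path $w_1,u_1,w_2,u_2$ with $w_1,w_2$ of type $\hat a$ and $u_1,u_2$ of type $\hat c$ is filled by a vertex $v$ of type $\hat b$ such that $\{v,w_1,u_1\},\{v,u_1,w_2\},\{v,w_2,u_2\},\{v,u_2,w_1\}$ are $2$-simplices; (ii.a) every embedded closed edge path of length $6$ alternating between types $\hat a$ and $\hat b$ is filled by a vertex of type $\hat c$ forming a $2$-simplex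 with each of its six edges; (ii.b) the same with $\hat a$ and $\hat c$ interchanged. *)

From Stdlib Require Import Arith.

(** Vertex types: the labels of the vertices of the model triangle Delta. *)
Inductive vtype := ta | tb | tc .

(** The complex is given by its set of 2-simplices [tri], a predicate on
    (unordered, hence permutation-invariant) triples of vertices.  Since it is
    homogeneous of dimension 2, its simplices are exactly the non-empty faces
    of the 2-simplices, so [tri] determines it; we require every vertex to lie
    in some 2-simplex.  A marking (compatible isomorphisms m_sigma onto Delta)
    is the same as a type function [typ] on vertices assigning pairwise
    distinct types to the three vertices of each 2-simplex. *)
Record A3complex := {
  vert : Type;
  tri : vert -> vert -> vert -> Prop;
  typ : vert -> vtype;
  tri_swap12 : forall x y z, tri x y z -> tri y x z;
  tri_swap23 : forall x y z, tri x y z -> tri x z y;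
  tri_types : forall x y z, tri x y z ->
      typ x <> typ y /\ typ y <> typ z /\ typ x <> typ z;
  homogeneous : forall x, exists y z, tri x y z
}.

Section Defs.
Variable X : A3complex.
Local Notation V := (vert X).

Definition edge (x y : V) : Prop := x <> y /\ exists z, tri X x y z.

Definition embedded_cycle {T : Type} (R : T -> T -> Prop) (n : nat)
    (f : nat -> T) : Prop :=
  (forall i j, i < n -> j < n -> f i = f j -> i = j) /\
  (forall i, i < n -> R (f i) (f ((S i) mod n))).

Definition link_vertex (v u : V) : Prop := edge v u.
Definition link_adj (v u w : V) : Prop := tri X v u w.

Definition link_girth_ge6 (v : V) : Prop :=
  forall n (f : nat -> V), 3 <= n <= 5 ->
    (forall i, i < n -> link_vertex v (f i)) ->
    ~ embedded_cycle (link_adj v) n f.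

Definition link_complete_bipartite (v : V) : Prop :=
  exists part : V -> bool,
    forall u w, link_vertex v u -> link_vertex v w ->
      (link_adj v u w <-> part u <> part w).

Definition link_has_4cycle (v : V) : Prop :=
  exists f : nat -> V, (forall i, i < 4 -> link_vertex v (f i)) /\
    embedded_cycle (link_adj v) 4 f.

Definition hexagons_filled (t1 t2 t3 : vtype) : Prop :=
  forall f : nat -> V,
    embedded_cycle edge 6 f ->
    (forall i, i < 6 -> typ X (f i) = t1 \/ typ X (f i) = t2) ->
    (forall i, i < 6 -> typ X (f i) <> typ X (f ((S i) mod 6))) ->
    exists c, typ X c = t3 /\
      forall i, i < 6 -> tri X c (f i) (f ((S i) mod 6)).

Definition CCCC : Prop :=
  (forall v, typ X v = ta \/ typ X v = tc -> link_girth_ge6 v) /\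
  (forall v, typ X v = tb ->
     link_complete_bipartite v /\ link_has_4cycle v) /\
  (forall w1 u1 w2 u2,
     typ X w1 = ta -> typ X w2 = ta -> typ X u1 = tc -> typ X u2 = tc ->
     w1 <> w2 -> u1 <> u2 ->
     edge w1 u1 -> edge u1 w2 -> edge w2 u2 -> edge u2 w1 ->
     exists v, typ X v = tb /\
       tri X v w1 u1 /\ tri X v u1 w2 /\ tri X v w2 u2 /\ tri X v u2 w1) /\
  hexagons_filled ta tb tc /\
  hexagons_filled tc tb ta.

End Defs.

(* Let v be of type b.  Its link is complete bipartite, and since every link
   vertex has a link neighbour, the two sides are exactly its a- and its
   c-neighbours; the embedded 4-cycle shows each side has two vertices.  So
   there is a neighbour w' <> w of v of the type of w, and {v,w',u1},
   {v,w',u2} are 2-simplices.  The square w',u1,w,u2 is filled by a vertex v'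
   of type b; if v' <> v, then v,u1,v',u2 is an embedded 4-cycle in the link
   of w', contradicting girth >= 6.  Hence v' = v, which fills v,u1,w,u2. *)
From Stdlib Require Import Arith Lia Classical.

Definition cycle4 {T : Type} (a b c d : T) (i : nat) : T :=
  match i with 0 => a | 1 => b | 2 => c | _ => d end.

Lemma embedded_cycle4 {T : Type} (R : T -> T -> Prop) (a b c d : T) :
  a <> b -> a <> c -> a <> d -> b <> c -> b <> d -> c <> d ->
  R a b -> R b c -> R c d -> R d a ->
  embedded_cycle R 4 (cycle4 a b c d).
Proof.
  intros Nab Nac Nad Nbc Nbd Ncd Rab Rbc Rcd Rda. split.
  - intros i j Hi Hj E.
    destruct i as [|[|[|[|i]]]]; destruct j as [|[|[|[|j]]]]; try lia;
      simpl in E; congruence.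
  - intros i Hi. destruct i as [|[|[|[|i]]]]; try lia; assumption.
Qed.

Lemma vtype_third (s t x y : vtype) :
  s <> t -> x <> s -> x <> t -> y <> s -> y <> t -> x = y.
Proof. destruct s, t, x, y; congruence. Qed.

Section BVertexSquares.

Variable X : A3complex.
Local Notation V := (vert X).
Local Notation typ := (typ X).
Local Notation tri := (tri X).
Local Notation edge := (edge X).

Lemma tri_rot (x y z : V) : tri x y z -> tri y z x.
Proof. intro T. apply tri_swap23, tri_swap12, T. Qed.

Lemma tri_neq (x y z : V) : tri x y z -> y <> z.
Proof. intros T ->. destruct (tri_types X _ _ _ T) as [_ [N _]]. now apply N. Qed.

Lemma tri_edge (x y z : V) : tri x y z -> edge x y.
Proof.
  intro T. split; [|now exists z].
  apply (tri_neq z). apply tri_rot, tri_rot, T.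
Qed.

Lemma edge_sym (x y : V) : edge x y -> edge y x.
Proof. intros [N [z T]]. split; [congruence|]. exists z. now apply tri_swap12. Qed.

Lemma edge_typ_neq (x y : V) : edge x y -> typ x <> typ y.
Proof. intros [_ [z T]]. apply (tri_types X _ _ _ T). Qed.

Lemma tri_of_link_typ_neq (v u w : V) :
  typ v = tb -> link_complete_bipartite X v ->
  edge v u -> edge v w -> typ u <> typ w -> tri v u w.
Proof.
  intros Tv [part Hpart] Evu Evw Nuw.
  pose proof Evu as [_ [z Tz]].
  destruct (tri_types X _ _ _ Tz) as [Tvu [Tuz Tvz]].
  assert (Evz : edge v z) by (apply (tri_edge _ _ u), tri_swap23, Tz).
  assert (Tzw : typ z = typ w).
  { apply (vtype_third tb (typ u)); try congruence.
    intro E. apply (edge_typ_neq v w); congruence. }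
  assert (Puz : part u <> part z) by now apply (Hpart u z).
  apply (Hpart u w); auto. intro Puw.
  assert (Twz : tri v w z) by (apply (Hpart w z); auto; congruence).
  destruct (tri_types X _ _ _ Twz) as [_ [N _]]. congruence.
Qed.

Lemma link_4cycle_two_of_typ (v : V) (t : vtype) :
  typ v = tb -> link_has_4cycle X v -> t <> tb ->
  exists p q, p <> q /\ typ p = t /\ typ q = t /\ edge v p /\ edge v q.
Proof.
  intros Tv [f [Hl [Hinj Hadj]]] Nt.
  assert (Hneq : forall i, i < 4 -> typ (f i) <> tb /\
                   typ (f i) <> typ (f (S i mod 4))).
  { intros i Hi. destruct (tri_types X _ _ _ (Hadj i Hi)) as [A [B C]].
    split; congruence. }
  destruct (Hneq 0) as [N0 N01]; [lia|]. destruct (Hneq 1) as [N1 N12]; [lia|].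
  destruct (Hneq 2) as [N2 N23]; [lia|]. destruct (Hneq 3) as [N3 N30]; [lia|].
  simpl in *.
  assert (N02 : f 0 <> f 2) by (intro E; apply Hinj in E; lia).
  assert (N13 : f 1 <> f 3) by (intro E; apply Hinj in E; lia).
  assert (t = typ (f 0) \/ t = typ (f 1)) as [-> | ->]
    by (destruct t, (typ (f 0)), (typ (f 1)); intuition congruence).
  - exists (f 0), (f 2). repeat split; auto; [|apply Hl; lia..].
    symmetry. apply (vtype_third tb (typ (f 1))); congruence.
  - exists (f 1), (f 3). repeat split; auto; [|apply Hl; lia..].
    symmetry. apply (vtype_third tb (typ (f 2))); congruence.
Qed.

Lemma girth6_square (x v v' u1 u2 : V) :
  link_girth_ge6 X x ->
  tri x v u1 -> tri x u1 v' -> tri x v' u2 -> tri x u2 v -> u1 <> u2 -> v = v'.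
Proof.
  intros Hg T1 T2 T3 T4 N12. apply NNPP. intro Nvv'.
  apply (Hg 4 (cycle4 v u1 v' u2)); [lia| |].
  - intros i Hi. unfold link_vertex.
    destruct i as [|[|[|[|i]]]]; try lia; eapply tri_edge; eassumption.
  - apply embedded_cycle4; auto.
    + apply (tri_neq _ _ _ T1).
    + apply not_eq_sym, (tri_neq _ _ _ T4).
    + apply (tri_neq _ _ _ T2).
    + apply (tri_neq _ _ _ T3).
Qed.

Definition squares_filled (t1 t2 : vtype) : Prop :=
  forall w1 u1 w2 u2 : V,
    typ w1 = t1 -> typ w2 = t1 -> typ u1 = t2 -> typ u2 = t2 ->
    w1 <> w2 -> u1 <> u2 ->
    edge w1 u1 -> edge u1 w2 -> edge w2 u2 -> edge u2 w1 ->
    exists v, typ v = tb /\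
      tri v w1 u1 /\ tri v u1 w2 /\ tri v w2 u2 /\ tri v u2 w1.

Lemma squares_filled_swap (t1 t2 : vtype) :
  squares_filled t1 t2 -> squares_filled t2 t1.
Proof.
  intros Hsq w1 u1 w2 u2 Tw1 Tw2 Tu1 Tu2 Nw Nu E1 E2 E3 E4.
  destruct (Hsq u1 w2 u2 w1) as [v [Tv [S1 [S2 [S3 S4]]]]]; auto.
  exists v. tauto.
Qed.

Variables tw tu : vtype.
Hypothesis tw_neq_tb : tw <> tb.
Hypothesis b_links :
  forall v, typ v = tb -> link_complete_bipartite X v /\ link_has_4cycle X v.
Hypothesis tw_girth6 : forall x, typ x = tw -> link_girth_ge6 X x.
Hypothesis tw_tu_squares : squares_filled tw tu.

Lemma b_square_filled (v u1 w u2 : V) :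
  typ v = tb -> typ u1 = tu -> typ u2 = tu -> typ w = tw ->
  u1 <> u2 ->
  edge v u1 -> edge u1 w -> edge w u2 -> edge u2 v ->
  edge v w /\ tri v u1 w /\ tri v w u2.
Proof.
  intros Tv Tu1 Tu2 Tw N12 E1 E2 E3 E4.
  destruct (b_links v Tv) as [Hcb H4].
  assert (Nwu : tw <> tu) by (apply edge_typ_neq in E2; congruence).
  assert (Hw' : exists w', typ w' = tw /\ w' <> w /\ edge v w').
  { destruct (link_4cycle_two_of_typ v tw Tv H4 tw_neq_tb)
      as [p [q [Npq [Tp [Tq [Ep Eq]]]]]].
    destruct (classic (p = w)) as [-> | Npw]; [exists q | exists p]; auto. }
  destruct Hw' as [w' [Tw' [Nw' Ew']]].
  assert (R1 : tri v w' u1)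
    by (apply tri_of_link_typ_neq; auto; congruence).
  assert (R2 : tri v w' u2)
    by (apply tri_of_link_typ_neq; auto using edge_sym; congruence).
  destruct (tw_tu_squares w' u1 w u2) as [v' [_ [S1 [S2 [S3 S4]]]]]; auto.
  { apply (tri_edge _ _ v), tri_rot, R1. }
  { apply edge_sym, (tri_edge _ _ v), tri_rot, R2. }
  assert (v = v') as <-.
  { apply (girth6_square w' v v' u1 u2 (tw_girth6 w' Tw')); auto.
    - apply tri_swap12, R1.
    - apply tri_rot, S1.
    - apply tri_rot, tri_rot, S4.
    - apply tri_rot, R2. }
  split; [apply (tri_edge _ _ u2 S3)|auto].
Qed.

End BVertexSquares.

Theorem lemma5p6 (X : A3complex) (HX : CCCC X) :
  (* (iii.a) *)
  (forall (v u1 w u2 : vert X),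
     typ X v = tb -> typ X u1 = tc -> typ X u2 = tc -> typ X w = ta ->
     u1 <> u2 -> v <> w ->
     edge X v u1 -> edge X u1 w -> edge X w u2 -> edge X u2 v ->
     edge X v w /\ tri X v u1 w /\ tri X v w u2) /\
  (* (iii.b) *)
  (forall (v u1 w u2 : vert X),
     typ X v = tb -> typ X u1 = ta -> typ X u2 = ta -> typ X w = tc ->
     u1 <> u2 -> v <> w ->
     edge X v u1 -> edge X u1 w -> edge X w u2 -> edge X u2 v ->
     edge X v w /\ tri X v u1 w /\ tri X v w u2).
Proof.
  destruct HX as [Hgirth [Hb [Hsq _]]].
  (* [v <> w] is already forced by the types. *)
  split; intros v u1 w u2 Tv Tu1 Tu2 Tw N12 _.
  - apply (b_square_filled X ta tc); auto; discriminate.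
  - apply (b_square_filled X tc ta); auto; [discriminate|].
    apply squares_filled_swap. exact Hsq.
Qed.
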